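(* Let $(K,Q)$ be an admissible pair for the control system $\dot x(t)=F(x(t),\omega(t))$, $\omega\in\mathcal{U}$, on $M$. Then for every $\tau>0$ and every $f\in C(U,\mathbb{R})$, \[ P_{inv}(f,K,Q)=\limsup_{n\rightarrow\infty}\frac{1}{n\tau}\log a_{n\tau}(f,K,Q). \]
   Context: $M$ is a smooth (connected, second countable, Hausdorff, $C^\infty$) manifold. A control system on $M$ is $\dot x(t)=F(x(t),\omega(t))$, where $U\subset\mathbb{R}^m$ is compact (the control range), $\mathcal{U}$ is the set of measurable $\omega:\mathbb{R}\to\mathbb{R}^m$ with $\omega(t)\in U$ a.e., $F:M\times\mathbb{R}^m\to TM$ is $C^1$ with $F(\cdot,u)$ a smooth vector field for each $u\in U$, and for each $x\in M,\omega\in\mathcal{U}$ there is a unique solution $\varphi(t,x,\omega)$ defined for all $t\in\mathbb{R}$. A pair $(K,Q)$ of nonempty subsets of $M$ is admissible if $K$ is compact and for each $x\in K$ there is $\omega\in\mathcal{U}$ with $\varphi(t,x,\omega)\in Q$ for all $t\ge 0$. For $\tau>0$, a set $\mathcal{S}\subset\mathcal{U}$ is $(\tau,K,Q)$-spanning if for every $x\in K$ there is $\omega\in\mathcal{S}$ with $\varphi(t,x,\omega)\in Q$ for all $t\in[0,\tau]$. For $f\in C(U,\mathbb{R})$ (a potential) let $(S_\tau f)(\omega)=\int_0^\tau f(\omega(t))\,dt$, $a_\tau(f,K,Q)=\inf\{\sum_{\omega\in\mathcal{S}}e^{(S_\tau f)(\omega)}:\mathcal{S}\text{ is }(\tau,K,Q)\text{-spanning}\}$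 (possibly $+\infty$), and the invariance pressure $P_{inv}(f,K,Q)=\limsup_{\tau\to\infty}\frac{1}{\tau}\log a_\tau(f,K,Q)$. *)

From HB Require Import structures.
From mathcomp Require Import all_boot all_order all_algebra.
From mathcomp Require Import all_classical all_reals all_analysis.
Set Implicit Arguments. Unset Strict Implicit. Unset Printing Implicit Defensive.
Import Order.TTheory GRing.Theory Num.Theory.
Import numFieldNormedType.Exports.
Local Open Scope classical_set_scope.
Local Open Scope ring_scope.

Definition controls (R : realType) (m : nat) (U : set 'rV[R]_m)
  : set (R -> 'rV[R]_m) :=
  [set w : R -> 'rV[R]_m | (forall i : 'I_m, measurable_fun setT (fun t : R => w t ord0 i)) /\
           {ae (@lebesgue_measure R), forall t, U (w t)}].

Definition S_int (R : realType) (m : nat) (f : 'rV[R]_m -> R) (tau : R)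
  (w : R -> 'rV[R]_m) : R :=
  (\int[@lebesgue_measure R]_(t in `[0, tau]) f (w t))%R.

Definition spanning (R : realType) (m : nat) (M : Type) (U : set 'rV[R]_m)
  (phi : R -> M -> (R -> 'rV[R]_m) -> M) (tau : R) (K Q : set M)
  (S : set (R -> 'rV[R]_m)) : Prop :=
  S `<=` controls U /\
  forall x, K x -> exists2 w, S w & forall t, 0 <= t <= tau -> Q (phi t x w).

(* a_tau(f,K,Q) in [0,+oo] (inf of the empty set is +oo) *)
Definition a_tau (R : realType) (m : nat) (M : Type) (U : set 'rV[R]_m)
  (phi : R -> M -> (R -> 'rV[R]_m) -> M) (f : 'rV[R]_m -> R) (tau : R)
  (K Q : set M) : \bar R :=
  ereal_inf [set (\esum_(w in S) (expR (S_int f tau w))%:E)%E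
            | S in spanning U phi tau K Q].

Definition elog (R : realType) (x : \bar R) : \bar R :=
  match x with
  | r%:E => if (0 < r)%R then (ln r)%:E else -oo
  | +oo => +oo
  | -oo => -oo
  end%E.

Definition P_inv (R : realType) (m : nat) (M : Type) (U : set 'rV[R]_m)
  (phi : R -> M -> (R -> 'rV[R]_m) -> M) (f : 'rV[R]_m -> R) (K Q : set M)
  : \bar R :=
  limf_esup (fun tau : R => ((tau^-1)%:E * elog (a_tau U phi f tau K Q))%E)
            (pinfty_nbhs R).

Definition admissible (R : realType) (m : nat) (M : topologicalType)
  (U : set 'rV[R]_m) (phi : R -> M -> (R -> 'rV[R]_m) -> M) (K Q : set M)
  : Prop :=
  K !=set0 /\ Q !=set0 /\ compact K /\
  forall x, K x -> exists2 w, controls U w & forall t, 0 <= t -> Q (phi t x w).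

From HB Require Import structures.
From mathcomp Require Import all_boot all_order all_algebra.
From mathcomp Require Import all_classical all_reals all_analysis.
From mathcomp Require Import lra.
Set Implicit Arguments. Unset Strict Implicit. Unset Printing Implicit Defensive.
Import Order.TTheory GRing.Theory Num.Theory.
Import numFieldNormedType.Exports.
Local Open Scope classical_set_scope.
Local Open Scope ring_scope.

(* If |f| <= C on U, shortening the horizon from T to t <= T keeps every
   (T,K,Q)-spanning set (t,K,Q)-spanning and lowers each weight
   exp (S_T f w) by a factor at most exp (C (T - t)), so
   a_t <= exp (C (T - t)) a_T.  Every large t lies in a window
   (n tau - tau, n tau], hence (1/t) log a_t <= (C tau + log a_(n tau)) / t,
   which bounds the lim sup over real times by the lim sup along n tau; the
   reverse inequality holds because n tau tends to infinity.
   The integrand f o w need not be measurable (w takes values in U only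
   almost everywhere), so integrals are compared through their simple
   minorants. *)

Section nonnegative_integral_without_measurability.
Local Open Scope ereal_scope.
Context d (T : measurableType d) (R : realType) (mu : {measure set T -> \bar R}).
Import HBNNSimple.

Lemma ge0_le_integral_nomeas (D : set T) (f1 f2 : T -> \bar R) :
  (forall x, D x -> 0 <= f1 x) -> (forall x, D x -> f1 x <= f2 x) ->
  \int[mu]_(x in D) f1 x <= \int[mu]_(x in D) f2 x.
Proof.
move=> f10 f12.
have f20 x : D x -> 0 <= f2 x by move=> Dx; exact: le_trans (f10 x Dx) (f12 x Dx).
rewrite (ge0_integralE _ f10) (ge0_integralE _ f20).
apply: ereal_sup_le => _ [h hf1 <-]; exists h => //= x.
apply: le_trans (hf1 x) _; rewrite /patch; case: ifPn => // /[1!inE].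
exact: f12.
Qed.

Lemma ge0_subset_integral_nomeas (A B : set T) (f : T -> \bar R) :
  (forall x, 0 <= f x) -> A `<=` B ->
  \int[mu]_(x in A) f x <= \int[mu]_(x in B) f x.
Proof.
move=> f0 AB; rewrite (integral_mkcond A) (integral_mkcond B).
apply: ge0_le_integral_nomeas => x _; rewrite /patch.
  by case: ifPn.
by case: ifPn => [/[1!inE] /AB Bx|_]; [rewrite mem_set|case: ifPn].
Qed.

(* Splitting the simple minorants of [f] along [A] gives the inequality;
   no measurability of [f] is needed for this direction. *)
Lemma ge0_integral_le_setID (D A : set T) (f : T -> \bar R) : measurable A ->
  (forall x, D x -> 0 <= f x) ->
  \int[mu]_(x in D) f x <=
    \int[mu]_(x in D `&` A) f x + \int[mu]_(x in D `\` A) f x.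
Proof.
move=> mA f0; rewrite (ge0_integralE _ f0).
apply: ge_ereal_sup => _ [h hf <-].
rewrite -integralT_nnsfun -(setUv A) ge0_integral_setU //; first last.
- by rewrite disj_set2E setICr.
- by move=> y _; rewrite lee_fin.
- by apply/measurable_realfun.measurable_EFinP; exact: measurable_funTS.
- exact: measurableC.
rewrite setDE !integral_mkcondl.
by apply: leeD; apply: ge0_le_integral_nomeas => // y _; rewrite lee_fin.
Qed.

Lemma ge0_integral_le_ae_bound (E : set T) (f : T -> \bar R) (C : R) :
  measurable E -> (0 <= C)%R -> (forall x, 0 <= f x) ->
  {ae mu, forall x, f x <= C%:E} ->
  \int[mu]_(x in E) f x <= C%:E * mu E.
Proof.
move=> mE C0 f0 fC; rewrite (ge0_integralE _ (fun x _ => f0 x)).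
apply: ge_ereal_sup => _ [h hf <-].
have h0E x : ~ E x -> h x = 0%R.
  move=> Ex; apply/eqP; rewrite eq_le fun_ge0 andbT -lee_fin.
  by move: (hf x); rewrite /patch memNset.
rewrite -integralT_nnsfun.
have -> : \int[mu]_x (h x)%:E = \int[mu]_(x in E) (h x)%:E.
  rewrite [RHS]integral_mkcond; apply: eq_integral => x _.
  by rewrite /patch; case: ifPn => // /negP Ex; rewrite h0E// => /mem_set.
rewrite -integral_cst//; apply: ae_ge0_le_integral => //.
- by move=> x _; rewrite lee_fin.
- by apply/measurable_realfun.measurable_EFinP; exact: measurable_funTS.
- apply: filterS fC => x fxC Ex; apply: le_trans fxC.
  by move: (hf x); rewrite /patch mem_set.
Qed.

End nonnegative_integral_without_measurability.

Section integral_on_intervals.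
Local Open Scope ereal_scope.
Context (R : realType).
Local Notation mu := (@lebesgue_measure R).

Lemma lebesgue_measure_itv_bnd (a b : R) (ba bb : bool) : (a <= b)%R ->
  mu [set` Interval (BSide ba a) (BSide bb b)] = (b - a)%:E.
Proof.
move=> ab; rewrite lebesgue_measure_itv/= lte_fin.
have [_|le_ba] := ltP a b; first by rewrite EFinB.
suff -> : a = b by rewrite subrr.
by apply/eqP; rewrite eq_le ab le_ba.
Qed.

Variables (h : R -> \bar R) (C : R).
Hypotheses (C0 : (0 <= C)%R) (h0 : forall x, 0 <= h x).
Hypothesis hC : {ae mu, forall x, h x <= C%:E}.

Lemma ge0_integral_itv_fin_num (a b : R) : (a <= b)%R ->
  \int[mu]_(x in `[a, b]) h x \is a fin_num.
Proof.
move=> ab; rewrite ge0_fin_numE; last exact: integral_ge0.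
apply: le_lt_trans (ltry (C * (b - a))).
rewrite EFinM -(lebesgue_measure_itv_bnd true false ab).
exact: ge0_integral_le_ae_bound.
Qed.

Lemma ge0_integral_itv_le_shift (a t T : R) : (a <= t <= T)%R ->
  \int[mu]_(x in `[a, T]) h x <= \int[mu]_(x in `[a, t]) h x + (C * (T - t))%:E.
Proof.
move=> /andP[le_at le_tT].
apply: le_trans (ge0_integral_le_setID (D := `[a, T]%classic) mu
  (measurable_itv `[a, t]) (fun x _ => h0 x)) _.
have -> : `[a, T] `&` `[a, t] = `[a, t]%classic.
  by apply/setIidr/subset_itvl; rewrite bnd_simp.
have -> : `[a, T] `\` `[a, t] = `]t, T]%classic.
  apply/seteqP; split => x /=; rewrite !in_itv/=.
    by move=> [/andP[ax xT]]; rewrite ax xT/= andbT => /negP; rewrite -ltNge.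
  move=> /andP[tx xT]; rewrite xT (le_trans le_at (ltW tx)).
  by split => //; rewrite leNgt tx andbF.
apply: leeD2l; rewrite EFinM -(lebesgue_measure_itv_bnd false false le_tT).
exact: ge0_integral_le_ae_bound.
Qed.

End integral_on_intervals.

Lemma Rintegral_itv_le_shift (R : realType) (g : R -> R) (C a t T : R) :
  0 <= C -> a <= t <= T -> {ae @lebesgue_measure R, forall x, `|g x| <= C} ->
  \int[@lebesgue_measure R]_(x in `[a, t]) g x <=
  \int[@lebesgue_measure R]_(x in `[a, T]) g x + C * (T - t).
Proof.
move=> C0 tT gC; have /andP[le_at le_tT] := tT; set G := fun x => (g x)%:E.
(* Inference does not find the filter instance of the Lebesgue a.e. filter. *)
have ae_filter := ae_filter_ringOfSetsType (@lebesgue_measure R).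
have G0 := funepos_ge0 G; have N0 := funeneg_ge0 G.
have GC : {ae @lebesgue_measure R, forall x, (G^\+ x <= C%:E)%E}.
  apply: filterS gC => x gxC; rewrite funeposE ge_max !lee_fin C0 andbT.
  exact: le_trans (ler_norm _) gxC.
have NC : {ae @lebesgue_measure R, forall x, (G^\- x <= C%:E)%E}.
  apply: filterS gC => x gxC; rewrite funenegE ge_max !lee_fin C0 andbT.
  by apply: le_trans gxC; rewrite -normrN ler_norm.
have le_aT := le_trans le_at le_tT.
have fin_Pt := ge0_integral_itv_fin_num C0 G0 GC le_at.
have fin_PT := ge0_integral_itv_fin_num C0 G0 GC le_aT.
have fin_Nt := ge0_integral_itv_fin_num C0 N0 NC le_at.
have fin_NT := ge0_integral_itv_fin_num C0 N0 NC le_aT.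
have sub_tT : `[a, t] `<=` `[a, T] by apply: subset_itvl; rewrite bnd_simp.
have le_pos := ge0_subset_integral_nomeas (@lebesgue_measure R) G0 sub_tT.
have le_neg := ge0_integral_itv_le_shift C0 N0 NC tT.
have splitE s : (\int[@lebesgue_measure R]_(x in `[a, s]) (g x)%:E =
    \int[@lebesgue_measure R]_(x in `[a, s]) G^\+ x -
    \int[@lebesgue_measure R]_(x in `[a, s]) G^\- x)%E by exact: integralE.
move: le_pos le_neg; rewrite /Rintegral !splitE.
rewrite -(fineK fin_Pt) -(fineK fin_PT) -(fineK fin_Nt) -(fineK fin_NT).
rewrite -EFinD !lee_fin /=; lra.
Qed.

Section extended_log.
Local Open Scope ereal_scope.
Variable R : realType.

Lemma le_elog : {homo @elog R : x y / x <= y}.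
Proof.
move=> [x| |] [y| |] //=; rewrite ?leey ?leNye//.
rewrite lee_fin => xy; case: ifPn => x0; last by rewrite leNye.
by rewrite (lt_le_trans x0 xy) lee_fin ler_ln// posrE (lt_le_trans x0 xy).
Qed.

Lemma elog_expRM (c : R) (x : \bar R) : elog ((expR c)%:E * x) = c%:E + elog x.
Proof.
case: x => [x| |] /=.
- rewrite pmulr_rgt0 ?expR_gt0//; case: ifPn => x0; last by rewrite addeNy.
  by rewrite lnM ?posrE ?expR_gt0// expRK.
- by rewrite mulry gtr0_sg ?expR_gt0// mul1e /= addey.
- by rewrite mulrNy gtr0_sg ?expR_gt0// mul1e /= addeNy.
Qed.

End extended_log.

Section limit_superior.
Local Open Scope ereal_scope.
Variable R : realType.

Lemma lee_gtrP (x y : \bar R) :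
  reflect (forall r : R, y < r%:E -> x <= r%:E) (x <= y).
Proof.
apply: (iffP idP) => [xy r /ltW|xr]; first exact: le_trans.
case: y xr => [y| |] xr; rewrite ?leey//.
- by apply/lee_addgt0Pr => e e0; rewrite xr// lte_fin ltrDl.
- case: x xr => [x| |] xr; rewrite ?leNye//.
  + by have := xr (x - 1)%R (ltNyr _); rewrite lee_fin lerDl oppr_ge0 ler10.
  + by have := xr 0%R (ltNyr _); rewrite leNgt ltry.
Qed.

Context {T : choiceType} {X : filteredType T} (F : set_system X) (f : X -> \bar R).

Lemma limf_esup_le_near (y : \bar R) :
  (\forall x \near F, f x <= y) -> limf_esup f F <= y.
Proof.
move=> fy; rewrite limf_esupE; apply: ge_ereal_inf.
exists (ereal_sup (f @` [set x | f x <= y])); first by exists [set x | f x <= y].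
by apply: ge_ereal_sup => _ [x fxy <-].
Qed.

Lemma limf_esup_lt_near {FF : Filter F} (y : \bar R) :
  limf_esup f F < y -> \forall x \near F, f x < y.
Proof.
rewrite limf_esupE => /ereal_inf_lt[_ [V FV <-] Vy].
apply: filterS FV => x Vx; apply: le_lt_trans Vy.
by apply: ereal_sup_ubound; exists x.
Qed.

Lemma limf_esup_comp_le {S : choiceType} {Y : filteredType S} (G : set_system Y)
    (g : Y -> X) :
  g @ G --> F -> limf_esup (f \o g) G <= limf_esup f F.
Proof.
move=> gGF; rewrite !limf_esupE; apply: le_ereal_inf_tmp => _ [V FV <-].
apply: ge_ereal_inf; exists (ereal_sup ((f \o g) @` (g @^-1` V))).
  by exists (g @^-1` V) => //; exact: gGF.
by apply: ereal_sup_le => _ [s Vgs <-]; exists (g s).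
Qed.

End limit_superior.

Lemma ge0_esumZl (R : realType) (T : choiceType) (S : set T) (a : T -> \bar R)
    (k : R) : 0 < k -> (forall i, (0 <= a i)%E) ->
  (\esum_(i in S) (k%:E * a i) = k%:E * \esum_(i in S) a i)%E.
Proof.
move=> k0 a0; rewrite /esum -(ereal_sup_pZl _ k0); congr ereal_sup.
apply/seteqP; split => y.
- move=> [A SA <-]; exists (\sum_(x \in A) a x)%E; first by exists A.
  by rewrite ge0_mule_fsumr.
- by move=> [_ [A SA <-] <-]; exists A => //; rewrite ge0_mule_fsumr.
Qed.

Section spanning_sets.
Variables (R : realType) (m : nat) (M : Type) (U : set 'rV[R]_m).
Variables (phi : R -> M -> (R -> 'rV[R]_m) -> M) (K Q : set M).

Lemma spanning_le (t T : R) (S : set (R -> 'rV[R]_m)) : t <= T ->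
  spanning U phi T K Q S -> spanning U phi t K Q S.
Proof.
move=> tT [SU spanS]; split => // x Kx; have [w Sw wQ] := spanS x Kx.
by exists w => // s /andP[s0 st]; apply: wQ; rewrite s0 (le_trans st tT).
Qed.

Variables (f : 'rV[R]_m -> R) (C : R).
Hypotheses (C0 : 0 <= C) (fC : forall u, U u -> `|f u| <= C).

Lemma S_int_le_shift (w : R -> 'rV[R]_m) (t T : R) : controls U w ->
  0 <= t <= T -> S_int f t w <= S_int f T w + C * (T - t).
Proof.
move=> [_ wU] tT; apply: Rintegral_itv_le_shift => //.
have ae_filter := ae_filter_ringOfSetsType (@lebesgue_measure R).
by apply: filterS wU => s /fC.
Qed.

Lemma a_tau_le_shift (t T : R) : 0 <= t <= T ->
  (a_tau U phi f t K Q <= (expR (C * (T - t)))%:E * a_tau U phi f T K Q)%E.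
Proof.
move=> /andP[t0 tT]; rewrite /a_tau -ereal_inf_pZl ?expR_gt0//.
apply: le_ereal_inf_tmp => _ [_ [S spanS <-] <-].
apply: (@le_trans _ _ (\esum_(w in S) (expR (S_int f t w))%:E)%E).
  by apply: ereal_inf_lbound; exists S => //; exact: spanning_le tT spanS.
rewrite -ge0_esumZl ?expR_gt0//.
apply: le_esum => w Sw; rewrite -EFinM lee_fin -expRD ler_expR addrC.
by apply: S_int_le_shift; [exact: spanS.1|rewrite t0].
Qed.

Lemma elog_a_tau_le_shift (t T : R) : 0 <= t <= T ->
  (elog (a_tau U phi f t K Q) <= (C * (T - t))%:E + elog (a_tau U phi f T K Q))%E.
Proof. by move=> tT; rewrite -elog_expRM; exact/le_elog/a_tau_le_shift. Qed.

End spanning_sets.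

Section sampling.
Variable R : realType.

Lemma natmul_cvgy (tau : R) : 0 < tau -> (fun n : nat => n%:R * tau) @ \oo --> +oo.
Proof.
move=> tau0; apply/cvgryPge => A.
apply: filterS (cvgry_ge cvgr_idn (A / tau)) => n.
by rewrite ler_pdivrMr.
Qed.

Lemma exists_natmul_window (tau t : R) : 0 < tau -> 0 <= t ->
  exists n : nat, t < n%:R * tau <= t + tau.
Proof.
move=> tau0 t0; exists (Num.truncn (t / tau)).+1.
rewrite -ltr_pdivrMr// truncnS_gt/= -nat1r mulrDl mul1r addrC lerD2r.
by rewrite -ler_pdivlMr// truncn_le divr_ge0// ltW.
Qed.

Local Open Scope ereal_scope.

Lemma limn_esup_sampled_le (u : R -> \bar R) (tau : R) : (0 < tau)%R ->
  limn_esup (fun n => u (n%:R * tau)%R) <= limf_esup u (pinfty_nbhs R).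
Proof. by move=> tau0; apply: limf_esup_comp_le; exact: natmul_cvgy. Qed.

Lemma limf_esup_le_sampled (g : R -> \bar R) (c tau : R) : (0 < tau)%R ->
  (forall t T, (0 < t)%R -> (t <= T <= t + tau)%R -> g t <= g T + c%:E) ->
  limf_esup (fun t : R => t^-1%:E * g t) (pinfty_nbhs R) <=
  limn_esup (fun n => (n%:R * tau)^-1%:E * g (n%:R * tau)%R).
Proof.
move=> tau0 g_window; apply/lee_gtrP => r /limf_esup_lt_near[N _ gN].
apply/lee_addgt0Pr => e e0; apply: limf_esup_le_near.
pose M := (N%:R * tau + (`|c| + `|r| * tau) / e)%R.
have tau_ge0 := ltW tau0.
have slack0 : (0 <= (`|c| + `|r| * tau) / e)%R.
  by rewrite divr_ge0 ?addr_ge0 ?mulr_ge0 // ltW.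
have M0 : (0 <= M)%R by rewrite /M addr_ge0 // mulr_ge0.
exists M; split; first exact: num_real.
move=> t Mt; have t0 : (0 < t)%R := le_lt_trans M0 Mt.
have [n /andP[tT Tt]] := exists_natmul_window tau0 (ltW t0).
have Nn : (N <= n)%N.
  rewrite -(ler_nat R) -(ler_pM2r tau0) ltW// (le_lt_trans _ (lt_trans Mt tT))//.
  by rewrite /M lerDl.
have nt0 : (0 < n%:R * tau)%R := lt_trans t0 tT.
have gT : g (n%:R * tau)%R <= (n%:R * tau * r)%:E.
  by rewrite EFinM -lee_pdivrMl// ltW// gN.
have gt : g t <= (n%:R * tau * r + c)%:E.
  apply: le_trans (g_window t (n%:R * tau)%R t0 _) _; first by rewrite (ltW tT) Tt.
  by rewrite EFinD leeD2r.
rewrite lee_pdivrMl// (le_trans gt)// -EFinD -EFinM lee_fin.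
have rT : (r * (n%:R * tau - t) <= `|r| * tau)%R.
  have := ler_norm r; have := normr_ge0 r; nra.
have et : ((`|c| + `|r| * tau) / e < t)%R.
  by apply: le_lt_trans Mt; rewrite /M lerDr mulr_ge0.
rewrite ltr_pdivrMr// in et.
have := ler_norm c; nra.
Qed.

End sampling.

Lemma compact_continuous_bounded (R : realType) (V : normedModType R) (A : set V)
    (f : V -> R) : compact A -> {within A, continuous f} ->
  exists2 C, 0 <= C & forall u, A u -> `|f u| <= C.
Proof.
move=> cA fc; have [M [Mreal fM]] := compact_bounded (continuous_compact fc cA).
exists (`|M| + 1); first by rewrite addr_ge0.
move=> u Au; apply: fM; last by exists u.
by rewrite (le_lt_trans (real_ler_norm Mreal)) ?ltrDl.
Qed.

Theorem proposition2p9 (R : realType) (m : nat) (U : set 'rV[R]_m)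
  (M : topologicalType) (phi : R -> M -> (R -> 'rV[R]_m) -> M)
  (K Q : set M) :
  compact U -> U !=set0 -> hausdorff_space M ->
  (* phi is the (global) solution map of a time-invariant control system *)
  (forall x w, phi 0 x w = x) ->
  (forall t s x w, phi (t + s) x w = phi s (phi t x w) (fun r => w (r + t))) ->
  admissible U phi K Q ->
  forall (tau : R) (f : 'rV[R]_m -> R), 0 < tau -> {within U, continuous f} ->
  P_inv U phi f K Q =
  limn_esup (fun n : nat =>
    (((n%:R * tau)^-1)%:E * elog (a_tau U phi f (n%:R * tau) K Q))%E).
Proof.
move=> cU _ _ _ _ _ tau f tau0 fc.
have [C C0 fC] := compact_continuous_bounded cU fc.
apply/le_anti/andP; split; last exact: limn_esup_sampled_le.
apply: (limf_esup_le_sampled (c := C * tau)) => // t T t0 /andP[tT Ttau].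
have t_bnd : 0 <= t <= T by rewrite (ltW t0) tT.
apply: le_trans (elog_a_tau_le_shift phi K Q C0 fC t_bnd) _.
by rewrite [leRHS]addeC leeD// lee_fin ler_wpM2l// lerBlDl.
Qed.
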